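(* Let $\mathscr{X}$ be a complex Banach space and let $\mathfrak{M}\subseteq\mathfrak{C}(\mathscr{X})$ be either (i) a well-ordered nest, or (ii) a lattice of subspaces of the form $\mathfrak{M}=\mathfrak{C}_1\cup\cdots\cup\mathfrak{C}_n$ with $n\ge 2$, where $\mathfrak{C}_i=\{\{0\}\subsetneq\mathscr{M}^{(i)}_1\subsetneq\cdots\subsetneq\mathscr{M}^{(i)}_{q_i}\subsetneq\mathscr{X}\}$ ($q_i\ge1$), any non-trivial subspaces $\mathscr{M}^{(i)}_k$ and $\mathscr{M}^{(j)}_l$ with $i\neq j$ are incomparable under inclusion, and $q_i\neq q_j$ whenever $i\neq j$. Then $\mathrm{Col}(\mathfrak{M})=\mathrm{Grp}(\mathrm{Alg}(\mathfrak{M}))$.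
   Context: A nest is a family of closed subspaces containing $\{0\}$ and $\mathscr{X}$, totally ordered by inclusion and closed under arbitrary intersections and closed linear spans; it is well-ordered if every non-empty subset has a least element. A lattice of subspaces is a family of closed subspaces containing $\{0\},\mathscr{X}$ closed under $\cap$ and $\overline{\,\cdot+\cdot\,}$. $\mathrm{Alg}(\mathfrak{F})$ is the set of bounded operators leaving every subspace of $\mathfrak{F}$ invariant; $\mathrm{Grp}(\mathcal{A})$ is the group of invertible $S\in\mathcal{A}$ with $S^{-1}\in\mathcal{A}$. $\mathrm{Col}(\mathfrak{F})$ is the group of invertible $S\in\mathcal{B}(\mathscr{X})$ such that for every closed subspace $\mathscr{M}$: $\mathscr{M}\in\mathfrak{F}$ iff $S\mathscr{M}\in\mathfrak{F}$. *)

From HB Require Import structures.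
From mathcomp Require Import all_boot all_order all_algebra.
From mathcomp Require Import complex.
From mathcomp Require Import all_classical all_reals all_analysis.
Set Implicit Arguments. Unset Strict Implicit. Unset Printing Implicit Defensive.
Import Order.TTheory GRing.Theory Num.Theory.
Import numFieldNormedType.Exports.
Local Open Scope classical_set_scope.
Local Open Scope ring_scope.
Local Open Scope complex_scope.

Section Defs.
Context {R : realType} {V : completeNormedModType R[i]}.

Definition is_subspace (M : set V) : Prop :=
  M 0 /\ (forall (a : R[i]) x y, M x -> M y -> M (a *: x + y)).

Definition closed_subspace (M : set V) : Prop := is_subspace M /\ closed M.

Definition cspan (A : set V) : set V :=
  \bigcap_(M in [set M | closed_subspace M /\ A `<=` M]) M.

Definition bounded_op (T : V -> V) : Prop :=
  (forall (a : R[i]) x y, T (a *: x + y) = a *: T x + T y) /\ continuous T.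

Definition inverse_op (T S : V -> V) : Prop :=
  bounded_op S /\ S \o T = id /\ T \o S = id.

Definition invertible_op (T : V -> V) : Prop :=
  bounded_op T /\ exists S, inverse_op T S.

Definition is_nest (F : set (set V)) : Prop :=
  (forall M, F M -> closed_subspace M) /\
  F [set 0] /\ F setT /\
  (forall M N, F M -> F N -> M `<=` N \/ N `<=` M) /\
  (forall G, G `<=` F -> F (\bigcap_(M in G) M)) /\
  (forall G, G `<=` F -> F (cspan (\bigcup_(M in G) M))).

Definition well_ordered_nest (F : set (set V)) : Prop :=
  is_nest F /\
  (forall G, G `<=` F -> G !=set0 ->
     exists2 M, G M & forall N, G N -> M `<=` N).

Definition is_subspace_lattice (F : set (set V)) : Prop :=
  (forall M, F M -> closed_subspace M) /\
  F [set 0] /\ F setT /\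
  (forall M N, F M -> F N -> F (M `&` N)) /\
  (forall M N, F M -> F N -> F (closure [set x + y | x in M & y in N])).

Definition finite_chains_lattice (F : set (set V)) : Prop :=
  exists (n : nat) (q : 'I_n -> nat) (M : 'I_n -> nat -> set V),
    (2 <= n)%N /\
    (forall i, (1 <= q i)%N) /\
    (forall i k, (1 <= k <= q i)%N -> closed_subspace (M i k)) /\
    (forall i, [set 0] `<` M i 1) /\
    (forall i k, (1 <= k < q i)%N -> M i k `<` M i k.+1) /\
    (forall i, M i (q i) `<` setT) /\
    (forall i j k l, i != j -> (1 <= k <= q i)%N -> (1 <= l <= q j)%N ->
        ~ (M i k `<=` M j l)) /\
    (forall i j, i != j -> q i <> q j) /\
    F = [set [set 0]] `|` [set setT] `|`
        [set N | exists i k, (1 <= k <= q i)%N /\ N = M i k].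

Definition Alg (F : set (set V)) : set (V -> V) :=
  [set T | bounded_op T /\ forall M, F M -> T @` M `<=` M].

Definition Grp (A : set (V -> V)) : set (V -> V) :=
  [set S | A S /\ exists S', inverse_op S S' /\ A S'].

Definition Col (F : set (set V)) : set (V -> V) :=
  [set S | invertible_op S /\
     forall M, closed_subspace M -> (F M <-> F (S @` M))].

End Defs.

From mathcomp Require Import all_boot all_order all_algebra.
From mathcomp Require Import complex.
From mathcomp Require Import all_classical all_reals all_analysis.
Import GRing.Theory.
Local Open Scope classical_set_scope.
Local Open Scope complex_scope.

(* An invertible S lies in Col(F) exactly when S and S^-1, acting on subspaces
   by direct image, restrict to mutually inverse order automorphisms of
   (F, ⊆); it lies in Grp(Alg(F)) exactly when S fixes every member of F.  So
   the theorem says that both kinds of families are rigid: their only order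
   automorphism is the identity.  In a well-ordered family an automorphism f
   satisfies M ⊆ f M (if M is least where this fails, then f M fails as
   well, so M ⊆ f M after all), and so does its inverse, forcing f M = M.  In the lattice of chains an
   automorphism maps each chain C_i strictly increasingly into a single chain
   C_j; comparing with its inverse gives q_i = q_j, hence j = i since the
   lengths are distinct, and a chain has no non-trivial automorphism. *)

Set Implicit Arguments.
Record order_automorphism {T : Type} (F : set (set T))
    (f g : set T -> set T) : Prop := OrderAutomorphism {
  aut_mono : forall {A B}, A `<=` B -> f A `<=` f B;
  aut_mono_inv : forall {A B}, A `<=` B -> g A `<=` g B;
  autK : cancel f g;
  autKinv : cancel g f;
  aut_stable : forall {A}, F A -> F (f A);
  aut_stable_inv : forall {A}, F A -> F (g A) }.
Unset Implicit Arguments.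

Definition rigid {T : Type} (F : set (set T)) : Prop :=
  forall f g, order_automorphism F f g -> forall A, F A -> f A = A.

Section OrderAutomorphism.
Context {T : Type} {F : set (set T)} {f g : set T -> set T}.
Hypothesis aut : order_automorphism F f g.

Lemma order_automorphism_inv : order_automorphism F g f.
Proof. by case: aut => *; split. Qed.

Lemma aut_proper {A B} : A `<` B -> f A `<` f B.
Proof.
move=> [AB BA]; split; first exact: (aut_mono aut).
by move=> /(aut_mono_inv aut); rewrite !(autK aut).
Qed.

Lemma aut_fix_least {z} : F z -> (forall A, F A -> z `<=` A) -> f z = z.
Proof.
move=> Fz z_least; rewrite eqEsubset; split; last exact: z_least _ (aut_stable aut Fz).
rewrite -[X in _ `<=` X](autKinv aut z).
apply: (aut_mono aut); exact: z_least _ (aut_stable_inv aut Fz).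
Qed.

Lemma aut_fixT : f setT = setT.
Proof.
rewrite eqEsubset; split=> // x _.
by apply: (aut_mono aut (subsetT (g setT))); rewrite (autKinv aut).
Qed.

End OrderAutomorphism.

Section WellOrdered.
Context {T : Type} {F : set (set T)}.
Hypothesis F_least : forall G, G `<=` F -> G !=set0 ->
  exists2 M, G M & forall N, G N -> M `<=` N.

Lemma well_ordered_aut_expanding f g M :
  order_automorphism F f g -> F M -> M `<=` f M.
Proof.
move=> aut FM; apply: contrapT => M_fM.
have [M0 [FM0 M0_fM0] M0_least] := F_least [set M | F M /\ ~ M `<=` f M]
  (fun _ => @proj1 _ _) (ex_intro _ M (conj FM M_fM)).
have fM0_fM0 : ~ f M0 `<=` f (f M0).
  by move=> /(aut_mono_inv aut); rewrite !(autK aut).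
exact: M0_fM0 (M0_least (f M0) (conj (aut_stable aut FM0) fM0_fM0)).
Qed.

Lemma well_ordered_rigid : rigid F.
Proof.
move=> f g aut M FM; rewrite eqEsubset; split; last exact: well_ordered_aut_expanding aut FM.
rewrite -[X in _ `<=` X](autK aut M).
exact: well_ordered_aut_expanding (order_automorphism_inv aut) (aut_stable aut FM).
Qed.

End WellOrdered.

Section FiniteChains.
Context {T : Type} {z : set T} {n : nat} {q : 'I_n -> nat}
  {M : 'I_n -> nat -> set T} {F : set (set T)}.
Hypothesis q_gt0 : forall i, (1 <= q i)%N.
Hypothesis chain_bottom : forall i, z `<` M i 1.
Hypothesis chain_step : forall i k, (1 <= k < q i)%N -> M i k `<` M i k.+1.
Hypothesis chain_top : forall i, M i (q i) `<` setT.
Hypothesis chains_incomparable : forall i j k l, i != j ->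
  (1 <= k <= q i)%N -> (1 <= l <= q j)%N -> ~ (M i k `<=` M j l).
Hypothesis chain_lengths_distinct : forall i j, i != j -> q i <> q j.
Hypothesis F_chains : F = [set z] `|` [set setT] `|`
  [set N | exists i k, (1 <= k <= q i)%N /\ N = M i k].

Lemma chain_le {i a b} : (1 <= a)%N -> (a <= b)%N -> (b <= q i)%N ->
  M i a `<=` M i b.
Proof.
move=> a_gt0; elim: b => [|b IH] ab bq; first by case: a a_gt0 ab.
move: ab; rewrite leq_eqVlt => /orP [/eqP -> //|ab].
have b_range : (1 <= b < q i)%N by rewrite bq andbT (leq_trans a_gt0 ab).
exact: subset_trans (IH ab (ltnW bq)) (properW (chain_step i b b_range)).
Qed.

Lemma chain_lt {i a b} : (1 <= a)%N -> (a < b)%N -> (b <= q i)%N ->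
  M i a `<` M i b.
Proof.
case: b => // b a_gt0 ab bq.
have b_range : (1 <= b < q i)%N by rewrite bq andbT (leq_trans a_gt0 ab).
have [sub_ab nsub_ab] := chain_step i b b_range.
have Mab := chain_le a_gt0 ab (ltnW bq).
split; first exact: subset_trans Mab sub_ab.
by move=> Mba; apply: nsub_ab; apply: subset_trans Mba Mab.
Qed.

Lemma chain_lt_index {j a b} : (1 <= a <= q j)%N -> (1 <= b <= q j)%N ->
  M j a `<` M j b -> (a < b)%N.
Proof.
move=> /andP[_ aq] /andP[b_gt0 _] [_ nsub]; rewrite ltnNge; apply/negP => ba.
exact: nsub (chain_le b_gt0 ba aq).
Qed.

Lemma chain_subset_same {i j k l} : (1 <= k <= q i)%N -> (1 <= l <= q j)%N ->
  M i k `<=` M j l -> i = j.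
Proof. by move=> kr lr Mkl; apply: contrapT => /eqP ij; exact: chains_incomparable ij kr lr Mkl. Qed.

Lemma chain_inj {i j k l} : (1 <= k <= q i)%N -> (1 <= l <= q j)%N ->
  M i k = M j l -> i = j /\ k = l.
Proof.
move=> kr lr e; have ij : i = j by apply: chain_subset_same kr lr _; rewrite e.
subst j; split=> //; case/andP: kr lr => k_gt0 kq /andP[l_gt0 lq].
case: (ltngtP k l) => // kl; [have := chain_lt k_gt0 kl lq | have := chain_lt l_gt0 kl kq];
  by rewrite e => /properxx.
Qed.

Lemma chain_member {i k} : (1 <= k <= q i)%N -> F (M i k).
Proof. by move=> kr; rewrite F_chains; right; exists i, k. Qed.

Lemma bottom_member : F z.
Proof. by rewrite F_chains; left; left. Qed.

Lemma bottom_least A : F A -> z `<=` A.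
Proof.
rewrite F_chains => -[[->|->]|[i [k [/andP[k_gt0 kq] ->]]]] //.
exact: subset_trans (properW (chain_bottom i)) (chain_le (leqnn 1) k_gt0 kq).
Qed.

Lemma aut_chain_member {f g i k} : order_automorphism F f g ->
  (1 <= k <= q i)%N -> exists j l, (1 <= l <= q j)%N /\ f (M i k) = M j l.
Proof.
move=> aut kr; have /andP[k_gt0 kq] := kr.
have aut_inv := order_automorphism_inv aut.
have := aut_stable aut (chain_member kr); rewrite {1}F_chains => -[[/= e|/= e]|//].
- have Mz : M i k = z by rewrite -(autK aut (M i k)) e (aut_fix_least aut_inv bottom_member bottom_least).
  exfalso; case: (chain_bottom i) => _; apply; rewrite -Mz.
  exact: chain_le (leqnn 1) k_gt0 kq.
- have MT : M i k = setT by rewrite -(autK aut (M i k)) e (aut_fixT aut_inv).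
  exfalso; case: (chain_top i) => _; apply; rewrite -MT.
  exact: chain_le k_gt0 kq (leqnn _).
Qed.

Lemma aut_chain_into {f g} i : order_automorphism F f g ->
  exists j, forall k, (1 <= k <= q i)%N ->
    exists l, [/\ (1 <= l <= q j)%N, (k <= l)%N & f (M i k) = M j l].
Proof.
move=> aut; have [j [l [lr f_Mi1]]] := aut_chain_member (k := 1) aut (q_gt0 i).
exists j; elim=> [//|k IH] /andP[_ kq].
case: k IH kq => [|k] IH kq; first by exists l; split=> //; case/andP: lr.
have [l1 [l1r kl1 f_Mik]] := IH (ltnW kq).
have [j2 [l2 [l2r f_MiSk]]] := aut_chain_member (k := k.+2) aut kq.
have := aut_proper aut (chain_step i k.+1 kq); rewrite f_Mik f_MiSk => lt12.
have j2j := chain_subset_same l1r l2r (properW lt12); subst j2.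
by exists l2; split=> //; exact: leq_ltn_trans kl1 (chain_lt_index l1r l2r lt12).
Qed.

Lemma aut_chain_stable {f g} i : order_automorphism F f g ->
  forall k, (1 <= k <= q i)%N ->
    exists l, [/\ (1 <= l <= q i)%N, (k <= l)%N & f (M i k) = M i l].
Proof.
move=> aut; have [j f_into] := aut_chain_into i aut.
suff ji : j = i by subst j.
have [i' g_into] := aut_chain_into j (order_automorphism_inv aut).
have [l [lr _ f_Mi1]] := f_into 1%N (q_gt0 i).
have [m [mr _ g_Mjl]] := g_into l lr.
rewrite -f_Mi1 (autK aut) in g_Mjl.
have [ii' _] := chain_inj (k := 1) (q_gt0 i) mr g_Mjl; subst i'.
have top_range k : (1 <= q k <= q k)%N by rewrite q_gt0 leqnn.
have [li [/andP[_ li_qj] qi_li _]] := f_into (q i) (top_range i).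
have [lj [/andP[_ lj_qi] qj_lj _]] := g_into (q j) (top_range j).
apply: contrapT => /eqP ji; apply: (chain_lengths_distinct _ _ ji); apply/eqP.
by rewrite eqn_leq (leq_trans qj_lj lj_qi) (leq_trans qi_li li_qj).
Qed.

Lemma finite_chains_rigid : rigid F.
Proof.
move=> f g aut A; rewrite {1}F_chains => -[[/= ->|/= ->]|[i [k [kr ->]]]].
- exact: (aut_fix_least aut bottom_member bottom_least).
- exact: (aut_fixT aut).
have [l [lr kl f_Mik]] := aut_chain_stable i aut k kr.
have [m [mr lm g_Mil]] := aut_chain_stable i (order_automorphism_inv aut) l lr.
rewrite -f_Mik (autK aut) in g_Mil.
have [_ km] := chain_inj kr mr g_Mil; subst m.
by rewrite f_Mik; congr (M i _); apply/eqP; rewrite eqn_leq kl lm.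
Qed.

End FiniteChains.

Lemma image_comp_id {aT rT : Type} {f : aT -> rT} {g : rT -> aT} (A : set aT) :
  g \o f = id -> g @` (f @` A) = A.
Proof. by move=> gf; rewrite image_comp gf image_id. Qed.

Section Operators.
Context {R : realType} {V : completeNormedModType R[i]}.
Local Open Scope ring_scope.

Lemma bounded_op0 (S : V -> V) : bounded_op S -> S 0 = 0.
Proof.
by case=> lin _; have := lin (-1) 0 0; rewrite scaler0 addr0 scaleN1r addNr.
Qed.

Lemma closed_subspace_image_inverse {S S' : V -> V} {A : set V} :
  bounded_op S -> inverse_op S S' -> closed_subspace A -> closed_subspace (S' @` A).
Proof.
move=> bS [_ [S'S SS']] [[A0 A_lin] A_closed]; have [S_lin S_cont] := bS.
have S'K : cancel S S' := fun x => congr1 (@^~ x) S'S.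
have SK : cancel S' S := fun x => congr1 (@^~ x) SS'.
have -> : S' @` A = S @^-1` A.
  rewrite eqEsubset; split=> x; first by case=> a Aa <-; rewrite /preimage /= SK.
  by move=> Ax; exists (S x); rewrite ?S'K.
split; last exact: (continuous_closedP S).1 S_cont A A_closed.
split=> [|a x y Ax Ay]; first by rewrite /preimage /= bounded_op0.
by rewrite /preimage /= S_lin; exact: A_lin.
Qed.

Lemma Col_order_automorphism {F : set (set V)} {S S' : V -> V} :
  (forall M, F M -> closed_subspace M) -> Col F S -> inverse_op S S' ->
  order_automorphism F (fun A => S @` A) (fun A => S' @` A).
Proof.
move=> F_closed [[bS _] S_col] invS; have [_ [S'S SS']] := invS.
split=> [A B|A B|A|A|A FA|A FA]; try exact: image_subset; try exact: image_comp_id.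
- exact: (S_col A (F_closed A FA)).1 FA.
- case: (S_col _ (closed_subspace_image_inverse bS invS (F_closed A FA))) => _; apply.
  by rewrite image_comp_id.
Qed.

Lemma Alg_inverse_fix {F : set (set V)} {S S' : V -> V} :
  Alg F S -> Alg F S' -> S \o S' = id -> forall M, F M -> S @` M = M.
Proof.
move=> [_ S_inv] [_ S'_inv] SS' M FM; rewrite eqEsubset; split; first exact: S_inv.
by rewrite -{1}(image_comp_id M SS'); apply: image_subset; exact: S'_inv.
Qed.

Lemma Grp_Alg_sub_Col (F : set (set V)) : Grp (Alg F) `<=` Col F.
Proof.
move=> S [AlgS [S' [[bS' [S'S SS']] AlgS']]].
have S_fix := Alg_inverse_fix AlgS AlgS' SS'.
have S'_fix := Alg_inverse_fix AlgS' AlgS S'S.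
split; first by split; [case: AlgS | exists S'].
move=> M _; split=> [FM|FSM]; first by rewrite S_fix.
by rewrite -(image_comp_id M S'S) S'_fix.
Qed.

Lemma Col_sub_Grp_Alg (F : set (set V)) :
  (forall M, F M -> closed_subspace M) -> rigid F -> Col F `<=` Grp (Alg F).
Proof.
move=> F_closed F_rigid S S_col; have [[bS [S' invS]] _] := S_col.
have [bS' [S'S _]] := invS.
have S_fix := F_rigid _ _ (Col_order_automorphism F_closed S_col invS).
split; first by split=> // M FM; rewrite S_fix.
exists S'; split=> //; split=> // M FM.
by rewrite -{1}(S_fix M FM) image_comp_id.
Qed.

End Operators.

Theorem theorem3p14 (R : realType) (V : completeNormedModType R[i])
    (F : set (set V)) :
  well_ordered_nest F \/ (is_subspace_lattice F /\ finite_chains_lattice F) ->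
  Col F = Grp (Alg F).
Proof.
move=> F_hyp; have F_closed : forall M, F M -> closed_subspace M.
  by case: F_hyp => [[[]]|[[]]].
have F_rigid : rigid F.
  case: F_hyp => [[_ F_least]|[_ [n [q [M [_ [q_gt0 [_ [bot [step [top [incomp [dist F_chains]]]]]]]]]]]]].
  - exact: well_ordered_rigid F_least.
  - exact: finite_chains_rigid q_gt0 bot step top incomp dist F_chains.
rewrite eqEsubset; split; first exact: Col_sub_Grp_Alg.
exact: Grp_Alg_sub_Col.
Qed.
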